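(* Let $w$ and $t$ be positive integers with $t\ge 2$, and let $u=\lfloor (\frac{t}{2}+1)^2\rfloor$. Then there exists a constant $c>0$, depending only on $w$ and $t$, such that for every sufficiently large integer $v$ there exists a $t$-IPPS$(w,v)$ of size at least $c\,v^{\frac{w}{u-1}}$; that is, $I_t(w,v)\ge c\,v^{\frac{w}{u-1}}$.
   Context: A $(w,v)$ set system is a pair $(\mathcal{X},\mathcal{B})$ with $|\mathcal{X}|=v$ and $\mathcal{B}\subseteq\binom{\mathcal{X}}{w}$, where $\binom{\mathcal{X}}{w}$ denotes the family of all $w$-element subsets of $\mathcal{X}$; elements of $\mathcal{B}$ are called blocks. For a $w$-subset $T\subseteq\mathcal{X}$ let $P_t(T)=\{\mathcal{P}\subseteq\mathcal{B}: |\mathcal{P}|\le t,\ T\subseteq\bigcup_{B\in\mathcal{P}}B\}$. A $(w,v)$ set system is a $t$-parent-identifying set system, written $t$-IPPS$(w,v)$, if for every $w$-subset $T\subseteq\mathcal{X}$, either $P_t(T)$ is empty or $\bigcap_{\mathcal{P}\in P_t(T)}\mathcal{P}\neq\emptyset$. The size of a $t$-IPPS$(w,v)$ is $|\mathcal{B}|$, and $I_t(w,v)$ denotes the maximum size of a $t$-IPPS$(w,v)$. *)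

From Stdlib Require Import Reals.
From mathcomp Require Import all_boot.
Set Implicit Arguments. Unset Strict Implicit. Unset Printing Implicit Defensive.

Definition set_system (w v : nat) (B : {set {set 'I_v}}) : Prop :=
  forall b, b \in B -> #|b| = w.

Definition Pt (t v : nat) (B : {set {set 'I_v}}) (T : {set 'I_v})
  : {set {set {set 'I_v}}} :=
  [set P : {set {set 'I_v}} | [&& P \subset B, #|P| <= t &
                                  T \subset \bigcup_(b in P) b]].

Definition IPPS (t w v : nat) (B : {set {set 'I_v}}) : Prop :=
  set_system w B /\
  forall T : {set 'I_v}, #|T| = w ->
    Pt t B T = set0 \/ (\bigcap_(P in Pt t B T) P) != set0.

(* Call a w-uniform family of blocks union-expanding if every subfamily C of
   at least 2 and at most u = floor((t+2)^2/4) blocks covers more than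
   (|C| - 1) w points.  Such a family is t-parent-identifying: if the members
   of P_t(T) had no common block, a minimal subfamily Q of them with empty
   intersection would give each member a private block, so the union C of Q
   has at most |Q| (t + 2 - |Q|) <= u blocks, while every point of T lies in
   two blocks of C, forcing |U C| <= (|C| - 1) w.
   Union-expanding families are obtained by deletion: for m independent
   uniform w-subsets of a v-set, a fixed set of s <= u indices is collapsing
   (its blocks cover at most (s - 1) w points) with probability O(v^-w).  For
   m of order v^(w/(u-1)) the expected number of collapsing index sets is at
   most m/2, and discarding one index from each of them leaves at least m/2
   blocks. *)

From Stdlib Require Import Reals.
From mathcomp Require Import all_boot zify.
Set Implicit Arguments. Unset Strict Implicit. Unset Printing Implicit Defensive.

Lemma leq_expn2r m n e : m <= n -> m ^ e <= n ^ e.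
Proof. by case: e => // e le_mn; rewrite leq_exp2r. Qed.

Lemma leq_mul_expn a b e : 0 < e -> a * b ^ e <= (a * b) ^ e.
Proof.
move=> e_gt0; rewrite expnMn leq_mul2r; apply/orP; right.
by case: a => // a; rewrite -{1}(expn1 a.+1) leq_pexp2l.
Qed.

Lemma leq_mul_subn_sqr r n : r * (n - r) <= n ^ 2 %/ 4.
Proof.
rewrite leq_divRL //; have [le_rn | /ltnW] := leqP r n; last first.
  by rewrite -subn_eq0 => /eqP ->; rewrite muln0.
by rewrite mulnC -{2}(subnKC le_rn); case: (nat_AGM2 r (n - r)).
Qed.

Lemma exists_maximal_below a e V : 0 < a -> 0 < e -> a * 2 ^ e < V ->
  exists m, [/\ 0 < m, a * m.+1 ^ e < V & V <= a * m.+2 ^ e].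
Proof.
move=> a_gt0 e_gt0 below1.
have bounded j : a * j.+1 ^ e < V -> j <= V.
  have : j.+1 <= j.+1 ^ e by rewrite -{1}(expn1 j.+1) leq_pexp2l.
  have : j.+1 ^ e <= a * j.+1 ^ e by rewrite leq_pmull.
  lia.
have [m below_m max_m] := @ex_maxnP (fun j => a * j.+1 ^ e < V) V (ex_intro _ 1 below1) bounded.
exists m; split => //; first exact: max_m 1 below1.
by rewrite leqNgt; apply/negP => /max_m; rewrite ltnn.
Qed.

Lemma sum_mem_card (T : finType) (A : {set T}) : \sum_x (x \in A) = #|A|.
Proof. by rewrite -sum1_card [RHS]big_mkcond; apply: eq_bigr => x _; case: (x \in A). Qed.

Lemma sum_nat_pred_card (T : finType) (A : {pred T}) (P : pred T) :
  \sum_(x in A) P x = #|[set x in A | P x]|.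
Proof.
by rewrite -sum_mem_card big_mkcond; apply: eq_bigr => x _; rewrite inE; case: (x \in A).
Qed.

Lemma exists_leq_average (T : finType) (A : {pred T}) (f : T -> nat) c :
  \sum_(x in A) f x < #|A| * c.+1 -> exists2 x, x \in A & f x <= c.
Proof.
have [x /andP [xA fx] | none] := pickP [pred x | (x \in A) && (f x <= c)]; first by exists x.
rewrite -sum_nat_const ltnNge leq_sum // => x xA.
by have := none x; rewrite /= xA ltnNge => /negbT.
Qed.

Section SetFamilies.

Variable T : finType.

Lemma card_bigcup_le (I : finType) (A : {set I}) (F : I -> {set T}) :
  #|\bigcup_(i in A) F i| <= \sum_(i in A) #|F i|.
Proof.
rewrite (eq_bigr (fun i => \sum_x (x \in F i))) => [|i _]; last by rewrite sum_mem_card.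
rewrite -sum_mem_card exchange_big /=; apply: leq_sum => x _.
case: (boolP (x \in \bigcup_(i in A) F i)) => // /bigcupP [i iA xi].
by rewrite (bigD1 i) //= xi.
Qed.

Lemma card_bigcup_double_cover (C : {set {set T}}) (X : {set T}) :
  (forall x, x \in X -> 1 < #|[set b in C | x \in b]|) ->
  #|\bigcup_(b in C) b| + #|X| <= \sum_(b in C) #|b|.
Proof.
move=> covX; rewrite (eq_bigr (fun b : {set T} => \sum_x (x \in b))) => [|b _];
  last by rewrite sum_mem_card.
rewrite exchange_big /= -!sum_mem_card -big_split /=; apply: leq_sum => x _.
have -> : \sum_(b in C) (x \in b) = #|[set b in C | x \in b]|.
  by rewrite -sum_mem_card big_mkcond; apply: eq_bigr => b _; rewrite inE; case: (b \in C).
case: (boolP (x \in X)) => [/covX | _]; first by case: (x \in _) => /=; lia.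
rewrite addn0; case: (boolP (x \in \bigcup_(b in C) b)) => // /bigcupP [b bC xb].
by apply/card_gt0P; exists b; rewrite inE bC xb.
Qed.

Lemma exists_hitting_set (A : {set {set T}}) :
  (forall S, S \in A -> S != set0) ->
  exists2 D : {set T}, #|D| <= #|A| & forall S, S \in A -> ~~ [disjoint S & D].
Proof.
move=> A_neq0; pose pick1 (S : {set T}) := if [pick x in S] is Some x then [set x] else set0.
exists (\bigcup_(S in A) pick1 S).
  apply: leq_trans (card_bigcup_le _ _) _; rewrite -sum1_card leq_sum // => S _.
  by rewrite /pick1; case: pickP => [x _|_]; rewrite ?cards1 ?cards0.
move=> S SA; have /set0Pn [y yS] := A_neq0 S SA.
have [x pickS] : exists x, [pick x in S] = Some x.
  by case: pickP => [x _|/(_ y)]; [exists x | rewrite yS].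
have xS : x \in S by move: pickS; case: pickP => // x' x'S [<-].
apply/negP => /disjointFr/(_ xS)/negbT/negP; apply; apply/bigcupP; exists S => //.
by rewrite /pick1 pickS set11.
Qed.

Lemma card_small_sets k : #|[set S : {set T} | #|S| <= k]| <= #|T|.+1 ^ k.
Proof.
elim: k => [|k IHk].
  apply/card_le1_eqP => S1 S2; rewrite !inE !leqn0.
  by move=> /eqP/cards0_eq -> /eqP/cards0_eq ->.
pose add1 (p : {set T} * option T) := if p.2 is Some x then x |: p.1 else p.1.
have sub : [set S : {set T} | #|S| <= k.+1] \subset
           add1 @: setX [set S : {set T} | #|S| <= k] [set: option T].
  apply/subsetP => S; rewrite inE => cardS.
  have [-> | [x xS]] := set_0Vmem S.
    by apply/imsetP; exists (set0, None); rewrite // !inE cards0.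
  apply/imsetP; exists (S :\ x, Some x); last by rewrite /add1 /= setD1K.
  by rewrite !inE andbT; move: cardS; rewrite (cardsD1 x S) xS.
apply: leq_trans (subset_leq_card sub) _; apply: leq_trans (leq_imset_card _ _) _.
by rewrite cardsX cardsT card_option expnSr leq_mul2r IHk orbT.
Qed.

Lemma exists_minimal_empty_bigcap (A : {set {set T}}) :
  \bigcap_(P in A) P = set0 ->
  exists2 Q : {set {set T}}, Q \subset A &
    \bigcap_(P in Q) P = set0 /\
    forall P, P \in Q -> \bigcap_(P' in Q :\ P) P' != set0.
Proof.
move=> capA.
pose emptycap := [pred Q : {set {set T}} | (Q \subset A) && (\bigcap_(P in Q) P == set0)].
have emptycapA : emptycap A by rewrite /= subxx capA eqxx.
case: (arg_minnP (fun Q : {set {set T}} => #|Q|) emptycapA) => Q /andP [QA /eqP capQ] minQ.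
exists Q => //; split => // P PQ; apply/negP => /eqP capQP.
have := minQ (Q :\ P); rewrite /= capQP eqxx (subset_trans (subsetDl _ _) QA).
by rewrite (cardsD1 P Q) PQ ltnn => /(_ isT).
Qed.

Lemma private_element (Q : {set {set T}}) P :
  \bigcap_(P' in Q) P' = set0 -> \bigcap_(P' in Q :\ P) P' != set0 ->
  exists2 x, x \notin P & forall P', P' \in Q -> P' != P -> x \in P'.
Proof.
move=> capQ /set0Pn [x /bigcapP xcap]; exists x; last first.
  by move=> P' P'Q P'P; apply: xcap; rewrite !inE P'P.
apply/negP => xP; suff : x \in \bigcap_(P' in Q) P' by rewrite capQ inE.
apply/bigcapP => P' P'Q; have [-> //|P'P] := eqVneq P' P.
by apply: xcap; rewrite !inE P'P.
Qed.

Lemma exists_private_points (Q : {set {set T}}) :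
  (forall P, P \in Q -> exists2 x, x \notin P & forall P', P' \in Q -> P' != P -> x \in P') ->
  exists2 E : {set T}, #|E| <= #|Q| & forall P, P \in Q -> #|Q|.-1 <= #|P :&: E|.
Proof.
move=> privQ.
have [-> | [P0 P0Q]] := set_0Vmem Q; first by exists set0; rewrite ?cards0.
have [x0 _ _] := privQ P0 P0Q.
have /fin_all_exists [e eP] : forall P : {set T}, exists x : T, P \in Q ->
    x \notin P /\ forall P', P' \in Q -> P' != P -> x \in P'.
  move=> P; case: (boolP (P \in Q)) => [/privQ [x xP xQ] | _]; last by exists x0.
  by exists x.
have cardE : #|e @: Q| = #|Q|.
  apply: card_in_imset => P1 P2 P1Q P2Q eP12.
  apply: contraNeq (eP P1 P1Q).1 => P12; rewrite eP12; exact: (eP P2 P2Q).2.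
exists (e @: Q); first by rewrite cardE.
move=> P PQ; rewrite -cardE (cardsD1 (e P)) imset_f //= subset_leq_card //.
apply/subsetP => y /setD1P [eP'P /imsetP [P' P'Q y_eq]]; subst y.
rewrite inE imset_f // andbT.
by apply: (eP P' P'Q).2 => //; apply: contra_neq eP'P => ->.
Qed.

Lemma card_bigcup_private_le (Q : {set {set T}}) t :
  (forall P, P \in Q -> #|P| <= t) ->
  (forall P, P \in Q -> exists2 x, x \notin P & forall P', P' \in Q -> P' != P -> x \in P') ->
  #|\bigcup_(P in Q) P| <= #|Q| * (t + 2 - #|Q|).
Proof.
move=> cardP /exists_private_points [E cardE cardPE]; set r := #|Q| in cardE cardPE *.
have [-> | [P0 P0Q]] := set_0Vmem Q; first by rewrite big_set0 cards0.
have cardPdE P : P \in Q -> #|P :\: E| <= t - r.-1.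
  by move=> PQ; have := cardsID E P; have := cardPE P PQ; have := cardP P PQ; lia.
have sub : \bigcup_(P in Q) P \subset E :|: \bigcup_(P in Q) (P :\: E).
  apply/subsetP => x /bigcupP [P PQ xP]; rewrite inE.
  by case: (boolP (x \in E)) => //= xE; apply/bigcupP; exists P; rewrite // inE xE.
apply: leq_trans (subset_leq_card sub) _; apply: leq_trans (leq_card_setU _ _) _.
apply: leq_trans (leq_add cardE (card_bigcup_le _ _)) _.
apply: (@leq_trans (r + \sum_(P in Q) (t - r.-1))); first by rewrite leq_add2l leq_sum.
have r_gt0 : 0 < r by apply/card_gt0P; exists P0.
have r_le_t : r.-1 <= t.
  by have := cardPE P0 P0Q; have := cardP P0 P0Q; have := subset_leq_card (subsetIl P0 E); lia.
rewrite sum_nat_const -/r; nia.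
Qed.

Lemma cover_twice (Q : {set {set {set T}}}) x :
  Q != set0 -> \bigcap_(P in Q) P = set0 ->
  (forall P, P \in Q -> exists2 b, b \in P & x \in b) ->
  1 < #|[set b in \bigcup_(P in Q) P | x \in b]|.
Proof.
move=> /set0Pn [P0 P0Q] capQ coverQ; have [b0 b0P0 xb0] := coverQ P0 P0Q.
rewrite ltnNge; apply/negP => /card_le1_eqP xC1.
suff : b0 \in \bigcap_(P in Q) P by rewrite capQ inE.
apply/bigcapP => P PQ; have [b bP xb] := coverQ P PQ.
suff -> : b0 = b by [].
apply: xC1; rewrite !inE.
  by rewrite xb andbT; apply/bigcupP; exists P.
by rewrite xb0 andbT; apply/bigcupP; exists P0.
Qed.

End SetFamilies.

Definition union_expanding (T : finType) (u w : nat) (B : {set {set T}}) :=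
  forall C : {set {set T}}, C \subset B -> 2 <= #|C| <= u ->
    (#|C| - 1) * w < #|\bigcup_(b in C) b|.

Lemma IPPS_of_union_expanding t w v (B : {set {set 'I_v}}) :
  0 < w -> set_system w B -> union_expanding ((t + 2) ^ 2 %/ 4) w B -> IPPS t w B.
Proof.
move=> w_gt0 Bw Bexp; split=> // T cardT.
have [->|_] := eqVneq (Pt t B T) set0; [by left | right].
apply/negP => /eqP capPt.
have [Q QPt [capQ minQ]] := exists_minimal_empty_bigcap capPt.
have PtP P : P \in Q -> [/\ P \subset B, #|P| <= t & T \subset \bigcup_(b in P) b].
  by move=> /(subsetP QPt); rewrite inE => /and3P.
have Q_neq0 : Q != set0.
  by apply/eqP => Q0; move: capQ; rewrite Q0 big_set0 => /setP/(_ set0); rewrite !inE.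
set C := \bigcup_(P in Q) P.
have CB : C \subset B by apply/bigcupsP => P /PtP [].
have cardC : #|C| <= (t + 2) ^ 2 %/ 4.
  apply: leq_trans (leq_mul_subn_sqr #|Q| _); apply: card_bigcup_private_le.
    by move=> P /PtP [].
  by move=> P PQ; apply: private_element capQ (minQ P PQ).
have twice x : x \in T -> 1 < #|[set b in C | x \in b]|.
  move=> xT; apply: cover_twice Q_neq0 capQ _ => P /PtP [_ _ /subsetP/(_ x xT)].
  by case/bigcupP=> b bP xb; exists b.
have [x xT] : exists x, x \in T by apply/card_gt0P; rewrite cardT.
have cardC2 : 2 <= #|C|.
  apply: leq_trans (twice x xT) (subset_leq_card _).
  by apply/subsetP => b; rewrite inE => /andP [].
have := card_bigcup_double_cover twice.
rewrite (eq_bigr (fun=> w)) => [|b bC]; last exact: Bw (subsetP CB b bC).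
rewrite sum_nat_const cardT.
have := Bexp C CB; rewrite cardC2 cardC => /(_ isT).
rewrite mulnBl mul1n; lia.
Qed.

Lemma card_family_prod (I T : finType) (G : I -> {set T}) :
  #|(family G : simpl_pred {ffun I -> T})| = \prod_i #|G i|.
Proof. by rewrite card_family /image_mem foldrE big_map big_enum. Qed.

Definition ksubsets (T : finType) k := [set A : {set T} | #|A| == k].

Lemma card_ksubsets_lb (T : finType) k :
  2 * k <= #|T| -> #|T| ^ k <= #|ksubsets T k| * (2 ^ k * k`!).
Proof.
move=> le_2k_T; rewrite /ksubsets card_draws mulnCA bin_ffact ffact_prod.
apply: (@leq_trans (2 ^ k * (#|T| - k) ^ k)).
  by rewrite -expnMn leq_expn2r //; lia.
have -> : (#|T| - k) ^ k = \prod_(i < k) (#|T| - k) by rewrite prod_nat_const card_ord.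
rewrite leq_mul2l; apply/orP; right.
by apply: leq_prod => i _; apply/leq_sub2l/ltnW.
Qed.

Definition collapsing (I T : finType) (u w : nat) (F : I -> {set T}) : {set {set I}} :=
  [set S : {set I} | (2 <= #|S| <= u) && (#|\bigcup_(i in S) F i| <= (#|S| - 1) * w)].

Lemma exists_union_expanding_subfamily (I T : finType) u w (F : I -> {set T}) :
  2 <= u -> (forall i, #|F i| = w) ->
  exists2 B : {set {set T}}, {in B, forall b : {set T}, #|b| = w} /\ union_expanding u w B
    & #|I| <= #|B| + #|collapsing u w F|.
Proof.
move=> u_ge2 cardF.
have [S|D cardD hitD] := @exists_hitting_set I (collapsing u w F).
  by rewrite inE -card_gt0 => /andP [/andP [S_ge2 _] _]; lia.
have safe (S : {set I}) : S \subset ~: D -> S \notin collapsing u w F.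
  by move=> SD; apply/negP => /hitD; rewrite disjoints_subset SD.
have injF : {in ~: D &, injective F}.
  move=> i j iD jD Fij; apply: contraNeq (safe [set i; j] _) => [ij|]; last first.
    by apply/subsetP => k /set2P [] ->.
  rewrite inE cards2 ij u_ge2 mul1n -(cardF i) /=; apply: subset_leq_card.
  by apply/bigcupsP => k /set2P [] ->; rewrite ?Fij.
exists (F @: ~: D); first split.
- by move=> _ /imsetP [i _ ->].
- move=> C CB C_range; rewrite ltnNge; apply/negP => le_union.
  pose S := [set i in ~: D | F i \in C].
  have FS : F @: S = C.
    apply/setP => b; apply/imsetP/idP => [[i] | bC]; first by rewrite inE => /andP [_ FiC] ->.
    by have /imsetP [i iD Fi] := subsetP CB b bC; exists i; rewrite // inE iD -Fi bC.
  have injS : {in S &, injective F} by apply: sub_in2 injF => i; rewrite inE => /andP [].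
  apply: (negP (safe S _)); first by apply/subsetP => i; rewrite inE => /andP [].
  have cardS : #|S| = #|C| by rewrite -FS card_in_imset.
  have unionS : \bigcup_(i in S) F i = \bigcup_(b in C) b by rewrite -FS big_imset.
  by rewrite inE cardS C_range unionS.
- by rewrite card_in_imset //; have := cardsC D; lia.
Qed.

(* [K u w / v ^ w] bounds the probability that a fixed set of at most [u]
   indices is collapsing. *)
Definition K u w := 2 ^ (w * u * u.+1) * (2 ^ w * w`!) ^ u.

Section RandomFamily.

Variables (I T : finType) (u w : nat).

Local Notation W := (ksubsets T w).
Local Notation collapsing_family S :=
  [set F in family (fun=> W) | S \in collapsing u w (F : {ffun I -> {set T}})].

Lemma card_collapsing_family_le (S : {set I}) :
  #|collapsing_family S| * #|W| ^ #|S|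
    <= #|T|.+1 ^ ((#|S| - 1) * w) * (2 ^ ((#|S| - 1) * w)) ^ #|S| * #|W| ^ #|I|.
Proof.
set n := (#|S| - 1) * w.
(* Union bound over the union [U] of the blocks indexed by [S]. *)
pose G (U : {set T}) (i : I) := if i \in S then W :&: powerset U else W.
pose small := [set U : {set T} | #|U| <= n].
have sub : collapsing_family S \subset \bigcup_(U in small) [set F in family (G U)].
  apply/subsetP => F; rewrite !inE => /andP [/familyP FW /andP [_ small_union]].
  apply/bigcupP; exists (\bigcup_(i in S) F i); first by rewrite inE.
  rewrite inE; apply/familyP => i; rewrite /G; case: ifP => iS; last exact: FW.
  by rewrite inE FW powersetE (bigcup_sup _ iS).
have cardG U : U \in small -> #|[set F in family (G U)]| * #|W| ^ #|S|
                              <= (2 ^ n) ^ #|S| * #|W| ^ #|I|.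
  rewrite inE => cardU.
  have prodS : \prod_(i in S) #|G U i| <= (2 ^ n) ^ #|S|.
    rewrite -prod_nat_const; apply: leq_prod => i iS; rewrite /G iS.
    by rewrite (leq_trans (subset_leq_card (subsetIr _ _))) // card_powerset leq_exp2l.
  have prodNS : \prod_(i | i \notin S) #|G U i| = #|W| ^ #|~: S|.
    rewrite -prod_nat_const; apply: eq_big => [i|i]; first by rewrite inE.
    by rewrite /G => /negbTE ->.
  rewrite cardsE card_family_prod (bigID [in S]) /= prodNS -(cardsC S) expnD.
  by rewrite -mulnA [_ ^ #|~: S| * _]mulnC leq_mul2r prodS orbT.
apply: leq_trans (leq_mul (subset_leq_card sub) (leqnn _)) _.
apply: leq_trans (leq_mul (card_bigcup_le small _) (leqnn _)) _.
rewrite big_distrl /=; apply: leq_trans (leq_sum _ cardG) _.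
rewrite sum_nat_const -mulnA leq_mul2r; apply/orP; right.
by have := card_small_sets T n.
Qed.

Lemma card_collapsing_family_leK (S : {set I}) :
  0 < w -> 2 * w <= #|T| -> 0 < #|S| <= u ->
  #|collapsing_family S| * #|T| ^ w <= K u w * #|W| ^ #|I|.
Proof.
move=> w_gt0 le_2w_T /andP [S_gt0 S_le_u].
set v := #|T|; set N := #|W|; set s := #|S|; set n := (s - 1) * w.
set X := #|collapsing_family S|; set K0 := 2 ^ w * w`!.
have v_gt0 : 0 < v by lia.
have K0_gt0 : 0 < K0 by rewrite muln_gt0 expn_gt0 fact_gt0.
have vs : v ^ (w * s) <= N ^ s * K0 ^ s.
  by rewrite -expnMn expnM leq_expn2r // card_ksubsets_lb.
have v1n : v.+1 ^ n <= 2 ^ n * v ^ n by rewrite -expnMn leq_expn2r //; lia.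
have : X * v ^ w * v ^ n <= 2 ^ n * (2 ^ n) ^ s * K0 ^ s * N ^ #|I| * v ^ n.
  rewrite -mulnA -expnD (_ : w + n = w * s); last by rewrite /n; nia.
  apply: leq_trans (leq_mul (leqnn X) vs) _; rewrite mulnA.
  apply: leq_trans (leq_mul (card_collapsing_family_le S) (leqnn _)) _.
  apply: leq_trans (leq_mul (leq_mul (leq_mul v1n (leqnn _)) (leqnn _)) (leqnn _)) _.
  by rewrite -/N -/n -/s; apply: eq_leq; lia.
rewrite leq_pmul2r ?expn_gt0 ?v_gt0 // => /leq_trans; apply.
rewrite /K leq_mul2r -expnS -expnM; apply/orP; right.
by rewrite leq_mul ?leq_pexp2l // /n; nia.
Qed.

Lemma exists_few_collapsing :
  0 < w -> 0 < u -> 2 * w <= #|T| -> 2 * K u w * #|I|.+1 ^ u.-1 < #|T| ^ w ->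
  exists2 F : {ffun I -> {set T}}, (forall i, #|F i| = w) & 2 * #|collapsing u w F| <= #|I|.
Proof.
move=> w_gt0 u_gt0 le_2w_T largeT.
have per_S S : #|collapsing_family S| * #|T| ^ w
               <= (S \in [set S : {set I} | #|S| <= u]) * (K u w * #|W| ^ #|I|).
  rewrite inE; have [S_range|S_out] := boolP (0 < #|S| <= u).
    by rewrite (andP S_range).2 mul1n card_collapsing_family_leK.
  suff -> : collapsing_family S = set0 by rewrite cards0.
  apply/setP => F; rewrite !inE andbC; apply/negbTE; apply: contraNN S_out.
  by case/andP=> /andP [/andP [S_ge2 ->] _] _; rewrite andbT; lia.
have total :
    \sum_(F in family (fun=> W)) 2 * #|collapsing u w (F : {ffun I -> {set T}})| * #|T| ^ w
      <= 2 * (#|I|.+1 ^ u * (K u w * #|W| ^ #|I|)).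
  rewrite -big_distrl -big_distrr -[X in X <= _]mulnA leq_mul2l /=.
  rewrite (eq_bigr (fun F : {ffun I -> {set T}} => \sum_S (S \in collapsing u w F))) => [|F _];
    last by rewrite sum_mem_card.
  rewrite exchange_big big_distrl /=.
  rewrite (eq_bigr (fun S => #|collapsing_family S| * #|T| ^ w)) => [|S _];
    last by rewrite sum_nat_pred_card.
  apply: leq_trans (leq_sum _ (fun S _ => per_S S)) _.
  rewrite -big_distrl sum_mem_card /= leq_mul2r; apply/orP; right.
  exact: card_small_sets.
have W_gt0 : 0 < #|W| by rewrite /ksubsets card_draws bin_gt0; lia.
have [|F /familyP FW le_F] := @exists_leq_average _ (family (fun=> W))
    (fun F => 2 * #|collapsing u w (F : {ffun I -> {set T}})|) #|I|.
  rewrite -(ltn_pmul2r (_ : 0 < #|T| ^ w)) ?expn_gt0 ?(leq_trans _ le_2w_T) ?muln_gt0 //.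
  rewrite big_distrl /=; apply: leq_ltn_trans total _.
  rewrite card_family_prod prod_nat_const (@eq_card _ _ I) //.
  rewrite (_ : #|I|.+1 ^ u = #|I|.+1 * #|I|.+1 ^ u.-1); last by rewrite -expnS prednK.
  have N_gt0 : 0 < #|W| ^ #|I| by rewrite expn_gt0 W_gt0.
  set a := _ ^ u.-1; set N := _ ^ #|I|.
  rewrite (_ : 2 * _ = N * #|I|.+1 * (2 * K u w * a)); last by lia.
  by rewrite ltn_pmul2l // muln_gt0 N_gt0.
by exists F => // i; have := FW i; rewrite inE => /eqP.
Qed.

End RandomFamily.

Lemma exists_union_expanding_large (T : finType) u w m :
  0 < w -> 2 <= u -> 2 * w <= #|T| -> 2 * K u w * m.+1 ^ u.-1 < #|T| ^ w ->
  exists2 B : {set {set T}}, {in B, forall b : {set T}, #|b| = w} /\ union_expanding u w B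
    & m <= 2 * #|B|.
Proof.
move=> w_gt0 u_ge2 le_2w_T large.
have [|F cardF few] := @exists_few_collapsing 'I_m T u w w_gt0 (ltnW u_ge2) le_2w_T.
  by rewrite card_ord.
have [B Bexp sizeB] := exists_union_expanding_subfamily u_ge2 cardF.
by exists B => //; rewrite card_ord in few sizeB; lia.
Qed.

Lemma INR_expn m n : INR (m ^ n) = pow (INR m) n.
Proof. by elim: n => // n IHn; rewrite expnS -multE mult_INR IHn. Qed.

Lemma Rpower_INR_le (v w k n : nat) :
  0 < v -> 0 < k -> v ^ w <= n ^ k -> Rle (Rpower (INR v) (Rdiv (INR w) (INR k))) (INR n).
Proof.
move=> v_gt0 k_gt0 le_vw_nk.
have n_gt0 : 0 < n by case: n le_vw_nk => //; rewrite exp0n // leqn0 expn_eq0; lia.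
have INR_gt0 m : 0 < m -> Rlt 0 (INR m) by move=> m_gt0; apply/lt_0_INR/ltP.
have k_neq0 : INR k <> R0 by apply: not_0_INR; lia.
rewrite (_ : Rdiv (INR w) (INR k) = Rmult (INR w) (Rinv (INR k))) //.
rewrite -Rpower_mult Rpower_pow; last exact: INR_gt0.
rewrite -INR_expn -[INR n](Rpower_1 _ (INR_gt0 _ n_gt0)) -(Rinv_r _ k_neq0) -Rpower_mult.
rewrite Rpower_pow; last exact: INR_gt0.
rewrite -INR_expn; apply: Rle_Rpower_l.
  by apply/Rlt_le/Rinv_0_lt_compat/INR_gt0.
by split; [apply: INR_gt0; rewrite expn_gt0 v_gt0 | apply/le_INR/leP].
Qed.

Theorem theorem1 (w t : nat) (hw : 0 < w) (ht : 2 <= t) :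
  let u := ((t + 2) ^ 2) %/ 4 in
  exists c : R, Rlt 0 c /\
    exists N : nat, forall v : nat, N <= v ->
      exists B : {set {set 'I_v}}, IPPS t w B /\
        Rle (Rmult c (Rpower (INR v) (Rdiv (INR w) (INR (u - 1))))) (INR #|B|).
Proof.
move=> u; have u_ge2 : 2 <= u by rewrite /u leq_divRL //; nia.
set k := K u w; have k_gt0 : 0 < k by rewrite muln_gt0 !expn_gt0 muln_gt0 expn_gt0 fact_gt0.
have c_gt0 : Rlt 0 (Rinv (INR (12 * k))) by apply/Rinv_0_lt_compat/lt_0_INR/ltP; lia.
exists (Rinv (INR (12 * k))); split => //.
exists (2 * k * 2 ^ u.-1 + 2 * w) => v le_N_v.
have le_v_vw : v <= v ^ w by rewrite -{1}(expn1 v) leq_pexp2l //; lia.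
have [|||m [m_gt0 large_m small_m]] := @exists_maximal_below (2 * k) u.-1 (v ^ w); [lia..|].
have := @exists_union_expanding_large 'I_v u w m hw u_ge2.
rewrite card_ord => /(_ _ large_m) [|B [Bw Bexp] sizeB]; first by lia.
exists B; split; first exact: IPPS_of_union_expanding.
(* 12 comes from [2 * m.+2 <= 12 * #|B|], as [1 <= m <= 2 * #|B|]. *)
have : v ^ w <= (12 * k * #|B|) ^ (u - 1).
  rewrite subn1; apply: leq_trans small_m (leq_trans (leq_mul_expn _ _ _) _); first lia.
  by rewrite leq_expn2r //; nia.
have [v_gt0 u1_gt0] : 0 < v /\ 0 < u - 1 by lia.
move/(Rpower_INR_le v_gt0 u1_gt0) => le_y.
apply: Rle_trans (Rmult_le_compat_l _ _ _ (Rlt_le _ _ c_gt0) le_y) _.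
rewrite (mult_INR (12 * k) #|B|) -Rmult_assoc Rinv_l ?Rmult_1_l; first exact: Rle_refl.
by apply: not_0_INR; lia.
Qed.
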